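(* Let $\mathcal{A}$ be a primal algebra and let $<$ be a linear order on its universe $A$. Then the category $\mathbf{OV}_{\mathit{fin}}(\mathcal{A},<)$ is equivalent to the category $\mathbf{OFBA}$.
   Context: A primal algebra is a finite algebra with at least two elements in which every finitary operation on its universe is a term operation. For a linear order $<$ on $A$ and a positive integer $n$, the antilexicographic order $\sqsubset$ on $A^n$ is: $(x_1,\dots,x_n)\sqsubset(y_1,\dots,y_n)$ iff there is $s$ with $x_t=y_t$ for all $t>s$ and $x_s<y_s$. For a permutation $\pi$ of $\{1,\dots,n\}$, $\bar x\sqsubset_\pi\bar y$ iff $(x_{\pi(1)},\dots,x_{\pi(n)})\sqsubset(y_{\pi(1)},\dots,y_{\pi(n)})$; $\sqsubseteq_\pi$ is its reflexive version, and $\mathcal{A}^n_{\sqsubseteq_\pi}$ is the power algebra $\mathcal{A}^n$ expanded by $\sqsubseteq_\pi$. $\mathbf{OV}_{\mathit{fin}}(\mathcal{A},<)$ is the category whose objects are all structures isomorphic to some $\mathcal{A}^n_{\sqsubseteq_\pi}$ ($n$ a positive integer, $\pi$ a permutation of $\{1,\dots,n\}$) and whose morphisms are embeddings (injective maps preserving the algebra operations and preserving and reflecting the order relation). For a finite boolean algebra $\mathcal{B}$ with atoms $a_1,\dots,a_n$ and a linear order on the atoms $a_{i_1}<\dots<a_{i_n}$, write each element as $\delta_1 a_{i_1}\lor\dots\lor\delta_n a_{i_n}$ with $\delta_s\in\{0,1\}$ ($0\cdot b=0$, $1\cdot b=b$); the antilexicographic order sets $x\sqsubset y$ iff for the coefficient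 vectors $(\delta_s)$ of $x$ and $(\epsilon_s)$ of $y$ there is $s$ with $\delta_s<\epsilon_s$ and $\delta_t=\epsilon_t$ for all $t>s$. A linear order on $\mathcal{B}$ is natural if it arises this way from some linear order of the atoms. $\mathbf{OFBA}$ is the category whose objects are finite boolean algebras expanded by a natural linear order, and whose morphisms are embeddings (injective boolean homomorphisms preserving and reflecting the order). *)

From HB Require Import structures.
From mathcomp Require Import all_boot all_order all_fingroup.
From Stdlib Require Import FunctionalExtensionality ProofIrrelevance.
Set Implicit Arguments. Unset Strict Implicit. Unset Printing Implicit Defensive.
Import Order.TTheory.

Record Category := Cat {
  ob : Type;
  hom : ob -> ob -> Type;
  idm : forall a, hom a a;
  comp : forall a b c, hom b c -> hom a b -> hom a c;
  comp_id_l : forall a b (f : hom a b), comp (idm b) f = f;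
  comp_id_r : forall a b (f : hom a b), comp f (idm a) = f;
  comp_assoc : forall a b c d (h : hom c d) (g : hom b c) (f : hom a b),
      comp h (comp g f) = comp (comp h g) f }.
Arguments hom {C} a b : rename.
Arguments idm {C} a : rename.
Arguments comp {C a b c} g f : rename.

Record Functor (C D : Category) := Fun {
  fob : ob C -> ob D;
  fmap : forall a b, hom a b -> hom (fob a) (fob b);
  fmap_id : forall a, fmap (idm a) = idm (fob a);
  fmap_comp : forall a b c (g : hom b c) (f : hom a b),
      fmap (comp g f) = comp (fmap g) (fmap f) }.
Arguments fob {C D} F a : rename.
Arguments fmap {C D} F {a b} f : rename.

Definition is_iso (C : Category) (a b : ob C) (f : hom a b) : Prop :=
  exists g : hom b a, comp g f = idm a /\ comp f g = idm b.

Definition cat_equivalent (C D : Category) : Prop :=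
  exists (F : Functor C D) (G : Functor D C),
    (exists eta : forall a : ob C, hom a (fob G (fob F a)),
        (forall a b (f : hom a b),
            comp (fmap G (fmap F f)) (eta a) = comp (eta b) f) /\
        (forall a, is_iso (eta a))) /\
    (exists eps : forall b : ob D, hom (fob F (fob G b)) b,
        (forall a b (f : hom a b),
            comp (eps b) (fmap F (fmap G f)) = comp f (eps a)) /\
        (forall b, is_iso (eps b))).

Lemma sig_fun_eq (X Y : Type) (P : (X -> Y) -> Prop) (f g : {h : X -> Y | P h}) :
  (forall x, proj1_sig f x = proj1_sig g x) -> f = g.
Proof.
case: f g => [f pf] [g pg] /= E.
have efg : f = g by apply: functional_extensionality.
subst g; by rewrite (proof_irrelevance _ pf pg).
Qed.

Section UA.
Variables (Op : Type) (ar : Op -> nat).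

Definition ops_on (T : Type) := forall o : Op, ('I_(ar o) -> T) -> T.

Inductive term (n : nat) : Type :=
| Var : 'I_n -> term n
| App : forall o : Op, ('I_(ar o) -> term n) -> term n.

Fixpoint term_eval (T : Type) (opsT : ops_on T) (n : nat) (t : term n)
    (x : 'I_n -> T) : T :=
  match t with
  | Var i => x i
  | App o ts => opsT o (fun j => term_eval opsT (ts j) x)
  end.

Definition primal (A : finType) (opsA : ops_on A) : Prop :=
  1 < #|A| /\
  forall (n : nat) (f : ('I_n -> A) -> A), 0 < n ->
    exists t : term n, forall x, term_eval opsA t x = f x.

Definition preserves_ops (X Y : Type) (opsX : ops_on X) (opsY : ops_on Y)
    (f : X -> Y) : Prop :=
  forall o (args : 'I_(ar o) -> X), f (opsX o args) = opsY o (fun j => f (args j)).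

Definition pow_ops (A : Type) (opsA : ops_on A) (n : nat) :
    ops_on {ffun 'I_n -> A} :=
  fun o args => [ffun i => opsA o (fun j => args j i)].

Definition strict_linear (A : eqType) (lt : rel A) : Prop :=
  irreflexive lt /\ transitive lt /\ (forall x y, x != y -> lt x y || lt y x).

Definition antilex_le (A : Type) (lt : A -> A -> bool) (n : nat) (pi : 'S_n)
    (x y : {ffun 'I_n -> A}) : Prop :=
  x = y \/
  exists s : 'I_n, lt (x (pi s)) (y (pi s)) /\
     forall t : 'I_n, s < t -> x (pi t) = y (pi t).

Variables (A : finType) (opsA : ops_on A) (ltA : rel A).

Record OVobj := OVObj {
  ov_car : Type;
  ov_ops : ops_on ov_car;
  ov_le : ov_car -> ov_car -> Prop;
  ov_iso : exists (n : nat) (pi : 'S_n) (phi : ov_car -> {ffun 'I_n -> A}),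
      0 < n /\ bijective phi /\ preserves_ops ov_ops (@pow_ops _ opsA n) phi /\
      (forall x y, ov_le x y <-> antilex_le ltA pi (phi x) (phi y)) }.

Definition ov_embedding (X Y : OVobj) (f : ov_car X -> ov_car Y) : Prop :=
  injective f /\ preserves_ops (@ov_ops X) (@ov_ops Y) f /\
  (forall x y, ov_le x y <-> ov_le (f x) (f y)).

Definition OVhom (X Y : OVobj) := {f : ov_car X -> ov_car Y | ov_embedding f}.

Definition OVid (X : OVobj) : OVhom X X.
Proof.
exists id; split; first by move=> x y.
by split=> //.
Defined.

Definition OVcomp (X Y Z : OVobj) (g : OVhom Y Z) (f : OVhom X Y) : OVhom X Z.
Proof.
exists (proj1_sig g \o proj1_sig f).
case: g f => [g [gi [go gl]]] [f [fi [fo fl]]] /=; split.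
  by apply: inj_comp.
split; first by move=> o args /=; rewrite fo go.
by move=> x y; split=> [/(fl x y)/(gl _ _)|/(gl _ _)/(fl x y)].
Defined.

Definition OVfin : Category.
Proof.
refine (@Cat OVobj OVhom OVid OVcomp _ _ _);
  by move=> *; apply: sig_fun_eq.
Defined.

End UA.

Local Open Scope order_scope.

Definition ba_atom (d : Order.disp_t) (B : finCTBDistrLatticeType d) (a : B) : bool :=
  (a != \bot) && [forall b : B, (b <= a) ==> ((b == \bot) || (b == a))].

(* ord (reflexive, boolean) is natural: there is an enumeration
   s = [a_{i_1}; ...; a_{i_n}] of the atoms (listing the chosen linear
   order of the atoms in increasing order) such that ord is the reflexive
   antilexicographic order on coefficient vectors, the coefficient of
   x at the atom a being 1 iff a <= x. *)
Definition natural_order (d : Order.disp_t) (B : finCTBDistrLatticeType d)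
    (ord : rel B) : Prop :=
  exists s : seq B,
    uniq s /\ (forall a, a \in s = ba_atom a) /\
    forall x y, ord x y <->
      (x = y \/
       exists k, (k < size s)%N /\ ~~ (nth \bot s k <= x) /\ (nth \bot s k <= y) /\
         forall t, (k < t < size s)%N -> (nth \bot s t <= x) = (nth \bot s t <= y)).

Record OFBAobj := OFBAObj {
  ba_disp : Order.disp_t;
  ba_car : finCTBDistrLatticeType ba_disp;
  ba_nontrivial : (\bot : ba_car) != \top;
  ba_ord : rel ba_car;
  ba_natural : natural_order ba_ord }.

Definition ofba_embedding (X Y : OFBAobj) (f : ba_car X -> ba_car Y) : Prop :=
  injective f /\
  (forall x y, f (x `&` y) = f x `&` f y) /\
  (forall x y, f (x `|` y) = f x `|` f y) /\
  (forall x, f (~` x) = ~` f x) /\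
  f \bot = \bot /\ f \top = \top /\
  (forall x y, @ba_ord X x y = @ba_ord Y (f x) (f y)).

Definition OFBAhom (X Y : OFBAobj) := {f : ba_car X -> ba_car Y | ofba_embedding f}.

Definition OFBAid (X : OFBAobj) : OFBAhom X X.
Proof. by exists id; do !split. Defined.

Definition OFBAcomp (X Y Z : OFBAobj) (g : OFBAhom Y Z) (f : OFBAhom X Y) :
  OFBAhom X Z.
Proof.
exists (proj1_sig g \o proj1_sig f).
case: g f => [g [gi [gm [gj [gc [gb [gt go]]]]]]] [f [fi [fm [fj [fc [fb [ft fo]]]]]]] /=.
split; first by apply: inj_comp.
split; first by move=> x y /=; rewrite fm gm.
split; first by move=> x y /=; rewrite fj gj.
split; first by move=> x /=; rewrite fc gc.
split; first by rewrite /= fb gb.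
split; first by rewrite /= ft gt.
by move=> x y /=; rewrite fo go.
Defined.

Definition OFBA : Category.
Proof.
refine (@Cat OFBAobj OFBAhom OFBAid OFBAcomp _ _ _);
  by move=> *; apply: sig_fun_eq.
Defined.

(* Fix [z0 < z1] in [A]. The object [A^n] ordered by [⊑_π] is recorded by the boolean
   algebra of subsets of [{1,...,n}], i.e. of the {z0,z1}-valued characteristic vectors,
   ordered antilexicographically along [π]; this is a natural order. As [A] is primal,
   every homomorphism between powers of [A] commutes with all coordinatewise operations, so
   it maps characteristic vectors to characteristic vectors and acts on them as a boolean
   embedding that preserves and reflects the order. Conversely a finite boolean algebra [B]
   yields the boolean power [A[B]] of [A]-indexed partitions of unity in [B]; listing the
   atoms of [B] in their natural order identifies [A[B]] with an antilexicographically
   ordered [A^n]. The unit sends [x] to the partition [a |-> {i | x_i = a}], the counit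
   sends [S] to the [z1]-block of the partition with coordinates the characteristic vector
   of [S]. *)

From mathcomp Require Import all_boot all_order all_fingroup.
From Stdlib Require Import FunctionalExtensionality ClassicalEpsilon.
Set Implicit Arguments. Unset Strict Implicit. Unset Printing Implicit Defensive.
Import Order.Theory.
Import Order.DefaultSetSubsetOrder Order.SetSubsetOrder.Exports.
Local Open Scope order_scope.

(** * Atoms and partitions of unity in finite boolean algebras *)

Section Atoms.
Variables (d : Order.disp_t) (B : finCTBDistrLatticeType d).
Implicit Types (x y a : B).

Lemma atom_neq0 a : ba_atom a -> a != \bot.
Proof. by case/andP. Qed.

Lemma atom_le_eq a b : ba_atom a -> b <= a -> (b == \bot) || (b == a).
Proof. by case/andP=> _ /forallP /(_ b) /implyP. Qed.

Lemma atom_leC a x : ba_atom a -> (a <= ~` x) = ~~ (a <= x).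
Proof.
move=> ha; have a0 := atom_neq0 ha.
case/orP: (atom_le_eq ha (leIl a x)) => /eqP E.
- have ->: a <= x = false.
    by apply/negbTE/negP => ax; move: E; rewrite (meet_l ax) => E; rewrite E eqxx in a0.
  apply/meet_idPl; rewrite -[in RHS](meetx1 a) -(joinxC x) meetUr E.
  by rewrite joinC joinx0.
- have ax : a <= x by rewrite -E leIr.
  rewrite ax /=; apply/negP => ac.
  have : a <= x `&` ~` x by rewrite lexI ax ac.
  by rewrite meetxC lex0 (negbTE a0).
Qed.

Lemma atom_leU a x y : ba_atom a -> (a <= x `|` y) = (a <= x) || (a <= y).
Proof.
move=> ha; apply/idP/idP; last by case/orP=> h; [apply: lexUl|apply: lexUr].
move=> axy; apply/negPn/negP => /norP [nx ny].
have : a <= (x `|` y) `&` (~` x `&` ~` y) by rewrite !lexI axy !atom_leC // nx ny.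
rewrite meetUl meetA meetxC meet0x (meetC (~` x)) meetA meetxC meet0x joinx0 lex0.
by rewrite (negbTE (atom_neq0 ha)).
Qed.

Lemma atom_le_bigjoin a (I : finType) (P : pred I) (F : I -> B) :
  ba_atom a -> (a <= \join_(i | P i) F i) = [exists i, P i && (a <= F i)].
Proof.
move=> ha; have -> : (a <= \join_(i | P i) F i) = has (fun i => P i && (a <= F i)) (index_enum I).
  elim: (index_enum I) => [|i r IH]; first by rewrite big_nil lex0 (negbTE (atom_neq0 ha)).
  by rewrite big_cons /=; case: (P i) => //=; rewrite atom_leU // IH.
by apply/hasP/existsP => [[i _ h]|[i h]]; exists i => //; apply: mem_index_enum.
Qed.

Lemma exists_atom_le x : x != \bot -> exists2 a, ba_atom a & a <= x.
Proof.
elim: {x}_.+1 {-2}x (ltnSn #|[pred y : B | y <= x]|) => // k IH x hk x0.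
case ha: (ba_atom x); first by exists x.
move: ha; rewrite /ba_atom x0 /= => /negbT; rewrite negb_forall => /existsP [b].
rewrite negb_imply negb_or => /and3P [bx b0 bnx].
have [a ha ab] : exists2 a, ba_atom a & a <= b.
  apply: IH b0; rewrite -ltnS; apply: leq_trans hk.
  apply: proper_card; apply/properP; split.
    by apply/subsetP => y; rewrite !inE => yb; apply: le_trans yb bx.
  by exists x; rewrite !inE ?lexx //; apply/negP => xb; move: bnx; rewrite eq_le xb bx.
by exists a => //; apply: le_trans ab bx.
Qed.

Lemma le_atoms x y : (forall a, ba_atom a -> a <= x -> a <= y) -> x <= y.
Proof.
move=> h; apply/negPn/negP => nxy.
have : x `&` ~` y != \bot.
  apply: contra nxy => /eqP E.
  by rewrite -[x](meetx1) -(joinxC y) meetUr E joinx0 leIr.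
case/exists_atom_le => a ha; rewrite lexI atom_leC // => /andP [/h -> //].
Qed.

Lemma atom_ext x y : (forall a, ba_atom a -> (a <= x) = (a <= y)) -> x = y.
Proof. by move=> h; apply/le_anti; rewrite !le_atoms // => a /h ->. Qed.

End Atoms.

Section PartitionOfUnity.
Variables (I : finType) (i0 : I) (d : Order.disp_t) (B : finCTBDistrLatticeType d).
Implicit Types (p : {ffun I -> B}) (al : B).

Definition partition_of_unity p : bool :=
  [forall i, forall j, (i != j) ==> (p i `&` p j == \bot)] && (\join_i p i == \top).

Definition part_index p al : I := odflt i0 [pick i | al <= p i].

Lemma atom_le_part p al i : partition_of_unity p -> ba_atom al ->
  (al <= p i) = (part_index p al == i).
Proof.
case/andP => /forallP disj /eqP top ha.
have [j hj] : exists j, al <= p j.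
  have : al <= \join_i p i by rewrite top lex1.
  by rewrite atom_le_bigjoin // => /existsP [j /= hj]; exists j.
have uniq_block i1 i2 : al <= p i1 -> al <= p i2 -> i1 = i2.
  move=> h1 h2; apply/eqP/negPn/negP => ne.
  move/forallP: (disj i1) => /(_ i2) /implyP /(_ ne) /eqP E.
  have : al <= p i1 `&` p i2 by rewrite lexI h1 h2.
  by rewrite E lex0 (negbTE (atom_neq0 ha)).
rewrite /part_index; case: pickP => [k hk|none] /=; last by move: (none j); rewrite hj.
by apply/idP/eqP => [h|<-//]; apply: uniq_block hk h.
Qed.

Lemma atom_le_part_index p al : partition_of_unity p -> ba_atom al -> al <= p (part_index p al).
Proof. by move=> hp ha; rewrite (atom_le_part _ hp ha). Qed.

Lemma partition_of_unity_atoms p :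
  (forall al, ba_atom al -> exists i, al <= p i) ->
  (forall al i j, ba_atom al -> al <= p i -> al <= p j -> i = j) -> partition_of_unity p.
Proof.
move=> ex uq; apply/andP; split.
  apply/forallP => i; apply/forallP => j; apply/implyP => ne; apply/eqP.
  apply: atom_ext => al ha; rewrite lex0 (negbTE (atom_neq0 ha)) lexI.
  by apply/negP => /andP [h1 h2]; move: ne; rewrite (uq _ _ _ ha h1 h2) eqxx.
apply/eqP; apply: atom_ext => al ha; rewrite lex1 atom_le_bigjoin //.
by case: (ex _ ha) => i h; apply/existsP; exists i.
Qed.

End PartitionOfUnity.

(** * Homomorphisms between powers of a primal algebra *)

Section UniversalAlgebra.
Variables (Op : Type) (ar : Op -> nat).

Lemma preserves_term_eval (X Y : Type) (oX : ops_on ar X) (oY : ops_on ar Y) (f : X -> Y) :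
  preserves_ops oX oY f -> forall n (t : term ar n) x,
  f (term_eval oX t x) = term_eval oY t (fun i => f (x i)).
Proof.
move=> hf n; elim=> [i|o ts IH] x //=.
by rewrite hf; congr (oY o _); apply: functional_extensionality => j; apply: IH.
Qed.

Lemma term_eval_pow (A : Type) (oA : ops_on ar A) n k (t : term ar k)
    (xs : 'I_k -> {ffun 'I_n -> A}) :
  term_eval (@pow_ops _ _ _ oA n) t xs = [ffun i => term_eval oA t (fun j => xs j i)].
Proof.
elim: t xs => [i|o ts IH] xs /=; first by apply/ffunP => i'; rewrite ffunE.
apply/ffunP => i; rewrite !ffunE; congr (oA o _).
by apply: functional_extensionality => j; rewrite IH ffunE.
Qed.

Lemma preserves_ops_comp (X Y Z : Type) (oX : ops_on ar X) (oY : ops_on ar Y)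
    (oZ : ops_on ar Z) (f : X -> Y) (g : Y -> Z) :
  preserves_ops oX oY f -> preserves_ops oY oZ g -> preserves_ops oX oZ (g \o f).
Proof. by move=> hf hg o args /=; rewrite hf hg. Qed.

Lemma preserves_ops_can (X Y : Type) (oX : ops_on ar X) (oY : ops_on ar Y)
    (f : X -> Y) (g : Y -> X) :
  preserves_ops oX oY f -> cancel f g -> cancel g f -> preserves_ops oY oX g.
Proof.
move=> hf fK gK o args.
have -> : args = (fun j => f (g (args j))) by apply: functional_extensionality => j; rewrite gK.
by rewrite -hf fK; congr (oX o _); apply: functional_extensionality => j; rewrite gK.
Qed.

End UniversalAlgebra.

Section PrimalPowers.
Variables (Op : Type) (ar : Op -> nat) (A : finType) (opsA : ops_on ar A).
Hypothesis primalA : primal opsA.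
Local Notation pw n := (@pow_ops _ _ _ opsA n).

Lemma pow_hom_pointwise n m (g : {ffun 'I_n -> A} -> {ffun 'I_m -> A}) :
  preserves_ops (pw n) (pw m) g ->
  forall k (F : ('I_k -> A) -> A) (xs : 'I_k -> {ffun 'I_n -> A}), (0 < k)%N ->
  g [ffun i => F (fun j => xs j i)] = [ffun i => F (fun j => g (xs j) i)].
Proof.
move=> hg k F xs k0; have [t Ht] := primalA.2 k F k0.
have F_term p (ys : 'I_k -> {ffun 'I_p -> A}) :
    [ffun i => F (fun j => ys j i)] = term_eval (pw p) t ys.
  by rewrite term_eval_pow; apply/ffunP => i; rewrite !ffunE Ht.
by rewrite !F_term (preserves_term_eval hg).
Qed.

Variables (n m : nat) (g : {ffun 'I_n -> A} -> {ffun 'I_m -> A}).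
Hypothesis g_hom : preserves_ops (pw n) (pw m) g.

Lemma pow_hom_map1 (h : A -> A) (x : {ffun 'I_n -> A}) :
  g [ffun i => h (x i)] = [ffun i => h (g x i)].
Proof. exact: (pow_hom_pointwise g_hom (fun v : 'I_1 -> A => h (v ord0)) (fun _ => x)). Qed.

Lemma pow_hom_map2 (h : A -> A -> A) (x y : {ffun 'I_n -> A}) :
  g [ffun i => h (x i) (y i)] = [ffun i => h (g x i) (g y i)].
Proof.
exact: (pow_hom_pointwise g_hom (fun v : 'I_2 -> A => h (v ord0) (v ord_max))
          (fun j : 'I_2 => if val j == 0 then x else y)).
Qed.

End PrimalPowers.

Section StrictLinear.
Variables (A : eqType) (ltA : rel A).
Hypothesis ltA_linear : strict_linear ltA.

Lemma strict_linear_irr a : ltA a a = false.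
Proof. by case: ltA_linear => irr _; apply: irr. Qed.

Lemma strict_linear_asym a b : ltA a b -> ltA b a = false.
Proof.
case: ltA_linear => _ [tr _] ab; apply/negP => ba.
by have := tr _ _ _ ab ba; rewrite strict_linear_irr.
Qed.

Lemma strict_linear_exists_lt (x y : A) : x != y -> exists a b, ltA a b.
Proof. by case: ltA_linear => _ [_ /(_ x y) tot] /tot /orP [] lt; do 2 eexists; apply: lt. Qed.

End StrictLinear.

Section Antilex.
Variables (A : eqType) (ltA : rel A) (n : nat) (pi : 'S_n).
Implicit Types x y : {ffun 'I_n -> A}.

Definition antilexb x y : bool :=
  (x == y) || [exists s, ltA (x (pi s)) (y (pi s)) &&
                 [forall t : 'I_n, (s < t)%N ==> (x (pi t) == y (pi t))]].

Lemma antilexbP x y : reflect (antilex_le ltA pi x y) (antilexb x y).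
Proof.
apply: (iffP orP) => [[/eqP -> | /existsP [s /andP [h1 /forallP h2]]] | [-> | [s [h1 h2]]]].
- by left.
- by right; exists s; split=> // t st; move/implyP: (h2 t) => /(_ st) /eqP.
- by left; rewrite eqxx.
- right; apply/existsP; exists s; rewrite h1 /=; apply/forallP => t; apply/implyP => st.
  by rewrite h2.
Qed.

Lemma antilexb_transfer x y x' y' :
  (forall i, ltA (x' i) (y' i) = ltA (x i) (y i)) ->
  (forall i, (x' i == y' i) = (x i == y i)) -> antilexb x' y' = antilexb x y.
Proof.
move=> Hlt Heq; rewrite /antilexb; congr orb.
  by apply/eqP/eqP => E; apply/ffunP => i; apply/eqP; [rewrite -Heq | rewrite Heq]; rewrite E.
by apply: eq_existsb => s; rewrite Hlt; congr andb; apply: eq_forallb => t; rewrite Heq.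
Qed.

End Antilex.

Section SubsetAlgebra.
Variable T : finType.

Lemma set1_le (j : T) (S : {set T}) : ([set j] <= S) = (j \in S).
Proof. exact: sub1set. Qed.

Lemma atom_set (S : {set T}) : ba_atom S = [exists j, S == [set j]].
Proof.
rewrite /ba_atom botEsubset; apply/idP/existsP => [/andP [/set0Pn [j jS] /forallP h] | [j /eqP ->]].
  exists j; move/implyP: (h [set j]); rewrite set1_le [S == _]eq_sym => /(_ jS) /orP [|//].
  by move/eqP/setP/(_ j); rewrite !inE eqxx.
apply/andP; split; first by apply/set0Pn; exists j; rewrite inE.
by apply/forallP => b; apply/implyP; rewrite [_ <= _]subset1 orbC.
Qed.

Lemma atom_set1 (j : T) : ba_atom [set j].
Proof. by rewrite atom_set; apply/existsP; exists j. Qed.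

End SubsetAlgebra.

Section CharVec.
Variables (A : finType) (z0 z1 : A).
Hypothesis z0_neq_z1 : z0 != z1.

Definition charvec n (S : {set 'I_n}) : {ffun 'I_n -> A} :=
  [ffun i => if i \in S then z1 else z0].

Lemma charvec_eq1 n (S : {set 'I_n}) i : (charvec S i == z1) = (i \in S).
Proof. by rewrite ffunE; case: (i \in S); rewrite ?eqxx // (negbTE z0_neq_z1). Qed.

Lemma charvec_inj n : injective (@charvec n).
Proof. by move=> S T E; apply/setP => i; rewrite -!charvec_eq1 E. Qed.

Lemma eq_charvec n (S T : {set 'I_n}) i :
  (charvec S i == charvec T i) = ((i \in S) == (i \in T)).
Proof.
have /negbTE ne := z0_neq_z1.
by rewrite !ffunE; case: (i \in S); case: (i \in T); rewrite //= ?eqxx ?ne // eq_sym ne.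
Qed.

Section PowerHomomorphisms.
Variables (Op : Type) (ar : Op -> nat) (opsA : ops_on ar A).
Hypothesis primalA : primal opsA.
Local Notation pw n := (@pow_ops _ _ _ opsA n).

Section Map.
Variables (n m : nat) (g : {ffun 'I_n -> A} -> {ffun 'I_m -> A}).
Hypothesis g_hom : preserves_ops (pw n) (pw m) g.

Definition cv_map (S : {set 'I_n}) : {set 'I_m} := [set j | g (charvec S) j == z1].

Lemma hom_charvec S : g (charvec S) = charvec (cv_map S).
Proof.
pose h a := if a == z1 then z1 else z0.
have hK p (S' : {set 'I_p}) : [ffun i => h (charvec S' i)] = charvec S'.
  by apply/ffunP => i; rewrite ffunE /h charvec_eq1 ffunE.
by rewrite -[in LHS]hK (pow_hom_map1 primalA g_hom); apply/ffunP => j; rewrite !ffunE inE.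
Qed.

Lemma cv_map_inj : injective g -> injective cv_map.
Proof. by move=> g_inj S T E; apply/charvec_inj/g_inj; rewrite !hom_charvec E. Qed.

Lemma in_cv_map_op (op : bool -> bool -> bool) (S T U : {set 'I_n}) :
  (forall i, (i \in U) = op (i \in S) (i \in T)) ->
  forall j, (j \in cv_map U) = op (j \in cv_map S) (j \in cv_map T).
Proof.
move=> hU j; pose h a b := if op (a == z1) (b == z1) then z1 else z0.
have hU' : charvec U = [ffun i => h (charvec S i) (charvec T i)].
  by apply/ffunP => i; rewrite [RHS]ffunE /h !charvec_eq1 -hU ffunE.
rewrite -charvec_eq1 -hom_charvec hU' (pow_hom_map2 primalA g_hom) ffunE /h.
by rewrite !hom_charvec !charvec_eq1; case: (op _ _); rewrite ?eqxx // (negbTE z0_neq_z1).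
Qed.

Lemma cv_mapI S T : cv_map (S :&: T) = cv_map S :&: cv_map T.
Proof. by apply/setP => j; rewrite (@in_cv_map_op andb S T) ?in_setI // => i; rewrite in_setI. Qed.

Lemma cv_mapU S T : cv_map (S :|: T) = cv_map S :|: cv_map T.
Proof. by apply/setP => j; rewrite (@in_cv_map_op orb S T) ?in_setU // => i; rewrite in_setU. Qed.

Lemma cv_mapC S : cv_map (~: S) = ~: cv_map S.
Proof.
by apply/setP => j; rewrite (@in_cv_map_op (fun b _ => ~~ b) S S) ?in_setC // => i; rewrite in_setC.
Qed.

Lemma cv_map0 : cv_map set0 = set0.
Proof.
apply/setP => j; rewrite (@in_cv_map_op (fun _ _ => false) set0 set0) ?in_set0 //.
by move=> i; rewrite in_set0.
Qed.

Lemma cv_mapT : cv_map setT = setT.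
Proof.
apply/setP => j; rewrite (@in_cv_map_op (fun _ _ => true) set0 set0) ?in_setT //.
by move=> i; rewrite in_setT.
Qed.

Lemma cv_map_fiber (x : {ffun 'I_n -> A}) a :
  cv_map [set i | x i == a] = [set j | g x j == a].
Proof.
pose h c := if c == a then z1 else z0; rewrite /cv_map.
have -> : charvec [set i | x i == a] = [ffun i => h (x i)].
  by apply/ffunP => i; rewrite !ffunE inE.
apply/setP => j; rewrite !inE (pow_hom_map1 primalA g_hom) ffunE /h.
by case: (g x j == a); rewrite ?eqxx // (negbTE z0_neq_z1).
Qed.

End Map.

Lemma cv_map_comp n m p (g1 : {ffun 'I_n -> A} -> {ffun 'I_m -> A})
    (g2 : {ffun 'I_m -> A} -> {ffun 'I_p -> A}) :
  preserves_ops (pw n) (pw m) g1 -> preserves_ops (pw m) (pw p) g2 ->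
  forall S, cv_map (g2 \o g1) S = cv_map g2 (cv_map g1 S).
Proof.
move=> hom1 hom2 S; apply: charvec_inj.
have hom12 := preserves_ops_comp hom1 hom2.
by rewrite -!hom_charvec //= (hom_charvec hom1).
Qed.

End PowerHomomorphisms.

End CharVec.

Section CharVecOrder.
Variables (A : finType) (ltA : rel A) (z0 z1 : A).
Hypotheses (ltA_linear : strict_linear ltA) (z0_lt_z1 : ltA z0 z1).
Local Notation cv := (charvec z0 z1).

Lemma lt_z0_neq_z1 : z0 != z1.
Proof. by apply: contraTneq z0_lt_z1 => ->; rewrite strict_linear_irr. Qed.

Lemma lt_charvec n (S T : {set 'I_n}) i : ltA (cv S i) (cv T i) = (i \notin S) && (i \in T).
Proof.
rewrite !ffunE; case: (i \in S); case: (i \in T); rewrite //= ?strict_linear_irr //.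
exact: strict_linear_asym.
Qed.

(* The antilexicographic comparison only sees where coordinates are [<], [=] or [>];
   here [D :&: ~: L] is the set where [y < x]. *)
Lemma antilexb_charvec n (pi : 'S_n) (x y : {ffun 'I_n -> A}) (D L : {set 'I_n}) :
  (forall i, (i \in D) = (x i != y i)) -> (forall i, (i \in L) = ltA (x i) (y i)) ->
  antilexb ltA pi (cv (D :&: ~: L)) (cv L) = antilexb ltA pi x y.
Proof.
move=> hD hL; apply: antilexb_transfer => i.
  by rewrite lt_charvec !inE hD hL; case: (ltA (x i) (y i)); rewrite ?andbF.
rewrite (eq_charvec lt_z0_neq_z1) !inE hD hL.
case: (eqVneq (x i) (y i)) => [->|_] /=; first by rewrite strict_linear_irr.
by case: (ltA (x i) (y i)).
Qed.

Lemma nth_set1_enum n (pi : 'S_n) k (hk : (k < n)%N) :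
  nth set0 [seq [set pi i] | i <- enum 'I_n] k = [set pi (Ordinal hk)].
Proof.
rewrite (nth_map (Ordinal hk)) ?size_enum_ord //; congr [set pi _]; apply: val_inj.
by rewrite /= nth_enum_ord.
Qed.

Lemma natural_antilex_subsets n (pi : 'S_n) :
  natural_order (B := {set 'I_n}) (fun S T => antilexb ltA pi (cv S) (cv T)).
Proof.
exists [seq [set pi i] | i <- enum 'I_n]; split.
  by rewrite map_inj_uniq ?enum_uniq // => i j /set1_inj /perm_inj.
split.
  move=> a; rewrite atom_set; apply/mapP/existsP => [[i _ ->]|[j /eqP ->]].
    by exists (pi i).
  by exists ((pi^-1)%g j); rewrite ?mem_enum // permKV.
move=> S T; rewrite size_map size_enum_ord; split.
- case/orP => [/eqP /(charvec_inj lt_z0_neq_z1) -> | /existsP [s /andP [h1 /forallP h2]]].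
    by left.
  right; exists s; rewrite ltn_ord nth_set1_enum.
  have -> : Ordinal (ltn_ord s) = s by apply: val_inj.
  move: h1; rewrite lt_charvec !set1_le => /andP [-> ->]; do !split=> //.
  move=> t /andP [st tn]; rewrite nth_set1_enum !set1_le.
  by move: (implyP (h2 (Ordinal tn)) st); rewrite (eq_charvec lt_z0_neq_z1) => /eqP.
- case=> [-> | [k [kn [h1 [h2 h3]]]]]; first by rewrite /antilexb eqxx.
  apply/orP; right; apply/existsP; exists (Ordinal kn).
  move: h1 h2; rewrite !nth_set1_enum !set1_le => h1 h2.
  rewrite lt_charvec h1 h2 /=; apply/forallP => t; apply/implyP => kt.
  have tE : Ordinal (ltn_ord t) = t by apply: val_inj.
  have := h3 t; rewrite kt ltn_ord !nth_set1_enum !set1_le tE.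
  by rewrite (eq_charvec lt_z0_neq_z1) => /(_ isT) ->.
Qed.

End CharVecOrder.

(** * The functor from OV_fin(A,<) to OFBA *)

Section OVCoordinates.
Variables (Op : Type) (ar : Op -> nat) (A : finType) (opsA : ops_on ar A) (ltA : rel A).
Local Notation OV := (OVobj opsA ltA).
Local Notation pw n := (@pow_ops _ _ _ opsA n).
Local Notation ovops X := (@ov_ops _ _ _ _ _ X).

Lemma ov_coordinates (X : OV) :
  {n : nat & {p : 'S_n & {phi : ov_car X -> {ffun 'I_n -> A} &
  {psi : {ffun 'I_n -> A} -> ov_car X | [/\ (0 < n)%N, cancel phi psi, cancel psi phi,
     preserves_ops (ovops X) (pw n) phi &
     forall x y, ov_le x y <-> antilexb ltA p (phi x) (phi y)]}}}}.
Proof.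
have [n Hn] := constructive_indefinite_description _ (ov_iso X); exists n.
have [p Hp] := constructive_indefinite_description _ Hn; exists p.
have [phi [n0 [bij [hom le]]]] := constructive_indefinite_description _ Hp; exists phi.
have [psi [phiK psiK]] : {psi | cancel phi psi /\ cancel psi phi}.
  by apply: constructive_indefinite_description; case: bij => psi; exists psi.
by exists psi; split=> // x y; rewrite le; split=> /antilexbP.
Qed.

Definition ov_dim X := projT1 (ov_coordinates X).
Definition ov_perm X : 'S_(ov_dim X) := projT1 (projT2 (ov_coordinates X)).
Definition ov_coord X : ov_car X -> {ffun 'I_(ov_dim X) -> A} :=
  projT1 (projT2 (projT2 (ov_coordinates X))).
Definition ov_uncoord X : {ffun 'I_(ov_dim X) -> A} -> ov_car X :=
  proj1_sig (projT2 (projT2 (projT2 (ov_coordinates X)))).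

Variable X : OV.
Let coordP := proj2_sig (projT2 (projT2 (projT2 (ov_coordinates X)))).

Lemma ov_dim_gt0 : (0 < ov_dim X)%N. Proof. by case: coordP. Qed.
Lemma ov_coordK : cancel (@ov_coord X) (@ov_uncoord X). Proof. by case: coordP. Qed.
Lemma ov_uncoordK : cancel (@ov_uncoord X) (@ov_coord X). Proof. by case: coordP. Qed.
Lemma ov_coord_hom : preserves_ops (ovops X) (pw (ov_dim X)) (@ov_coord X).
Proof. by case: coordP. Qed.
Lemma ov_uncoord_hom : preserves_ops (pw (ov_dim X)) (ovops X) (@ov_uncoord X).
Proof. exact: preserves_ops_can ov_coord_hom ov_coordK ov_uncoordK. Qed.
Lemma ov_leE x y : ov_le x y <-> antilexb ltA (ov_perm X) (ov_coord x) (ov_coord y).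
Proof. by case: coordP. Qed.

End OVCoordinates.

Section OVMorphisms.
Variables (Op : Type) (ar : Op -> nat) (A : finType) (opsA : ops_on ar A) (ltA : rel A).
Local Notation OV := (OVobj opsA ltA).
Local Notation pw n := (@pow_ops _ _ _ opsA n).
Local Notation ovops X := (@ov_ops _ _ _ _ _ X).
Variables (X Y : OV) (f : OVhom X Y).

Lemma ov_hom_inj : injective (proj1_sig f). Proof. by case: (proj2_sig f). Qed.
Lemma ov_hom_ops : preserves_ops (ovops X) (ovops Y) (proj1_sig f).
Proof. by case: (proj2_sig f) => _ []. Qed.
Lemma ov_hom_le x y : ov_le x y <-> ov_le (proj1_sig f x) (proj1_sig f y).
Proof. by case: (proj2_sig f) => _ [_]; apply. Qed.

Lemma ov_bijective_is_iso : bijective (proj1_sig f) -> is_iso (C := OVfin opsA ltA) f.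
Proof.
case=> g fK gK.
have g_emb : ov_embedding (X := Y) (Y := X) g.
  split; first exact: can_inj gK.
  split; first exact: preserves_ops_can ov_hom_ops fK gK.
  by move=> y1 y2; rewrite (ov_hom_le (g y1) (g y2)) !gK.
by exists (exist _ g g_emb); split; apply: sig_fun_eq => x /=; [apply: fK | apply: gK].
Qed.

Definition coord_map : {ffun 'I_(ov_dim X) -> A} -> {ffun 'I_(ov_dim Y) -> A} :=
  @ov_coord _ _ _ _ _ Y \o proj1_sig f \o @ov_uncoord _ _ _ _ _ X.

Lemma coord_map_hom : preserves_ops (pw (ov_dim X)) (pw (ov_dim Y)) coord_map.
Proof.
apply: preserves_ops_comp; first exact: ov_uncoord_hom.
apply: preserves_ops_comp; [exact: ov_hom_ops | exact: ov_coord_hom].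
Qed.

Lemma coord_map_inj : injective coord_map.
Proof. exact/inj_comp/can_inj/ov_uncoordK/inj_comp/ov_hom_inj/can_inj/ov_coordK. Qed.

Lemma coord_map_le x y :
  antilexb ltA (ov_perm Y) (coord_map x) (coord_map y) = antilexb ltA (ov_perm X) x y.
Proof.
apply/idP/idP => [|xy]; first by move/ov_leE/ov_hom_le/ov_leE; rewrite !ov_uncoordK.
by apply/ov_leE/ov_hom_le/ov_leE; rewrite !ov_uncoordK.
Qed.

End OVMorphisms.

Lemma coord_map_id (Op : Type) (ar : Op -> nat) (A : finType) (opsA : ops_on ar A)
    (ltA : rel A) (X : OVobj opsA ltA) :
  coord_map (OVid X) =1 id.
Proof. exact: ov_uncoordK. Qed.

Lemma coord_map_comp (Op : Type) (ar : Op -> nat) (A : finType) (opsA : ops_on ar A)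
    (ltA : rel A) (X Y Z : OVobj opsA ltA) (g : OVhom Y Z) (f : OVhom X Y) :
  coord_map (OVcomp g f) =1 coord_map g \o coord_map f.
Proof. by move=> x; rewrite /coord_map /= ov_coordK. Qed.

Lemma set0_neq_setT n : (0 < n)%N -> (\bot : {set 'I_n}) != \top.
Proof. by move=> n0; apply/negP => /eqP /setP /(_ (Ordinal n0)); rewrite !inE. Qed.

Section SubsetsFunctor.
Variables (Op : Type) (ar : Op -> nat) (A : finType) (opsA : ops_on ar A) (ltA : rel A).
Hypotheses (primalA : primal opsA) (ltA_linear : strict_linear ltA).
Variables (z0 z1 : A).
Hypothesis z0_lt_z1 : ltA z0 z1.
Local Notation OV := (OVobj opsA ltA).
Let z0_neq_z1 := lt_z0_neq_z1 ltA_linear z0_lt_z1.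

Definition subsets_obj (X : OV) : OFBAobj :=
  OFBAObj (set0_neq_setT (ov_dim_gt0 X)) (natural_antilex_subsets ltA_linear z0_lt_z1 (ov_perm X)).

Definition subsets_fun (X Y : OV) (f : OVhom X Y) : {set 'I_(ov_dim X)} -> {set 'I_(ov_dim Y)} :=
  cv_map z0 z1 (coord_map f).

Lemma subsets_fun_embedding (X Y : OV) (f : OVhom X Y) :
  ofba_embedding (X := subsets_obj X) (Y := subsets_obj Y) (subsets_fun f).
Proof.
have hom := coord_map_hom f; rewrite /subsets_fun.
split; first exact/(cv_map_inj z0_neq_z1 primalA hom)/coord_map_inj.
split; first by move=> S T; rewrite /= !meetEsubset (cv_mapI z0_neq_z1 primalA hom).
split; first by move=> S T; rewrite /= !joinEsubset (cv_mapU z0_neq_z1 primalA hom).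
split; first by move=> S; rewrite /= !complEsubset (cv_mapC z0_neq_z1 primalA hom).
split; first by rewrite /= !botEsubset (cv_map0 z0_neq_z1 primalA hom).
split; first by rewrite /= !topEsubset (cv_mapT z0_neq_z1 primalA hom).
by move=> S T /=; rewrite -!(hom_charvec z0_neq_z1 primalA hom) coord_map_le.
Qed.

Definition subsets_map (X Y : OV) (f : OVhom X Y) : OFBAhom (subsets_obj X) (subsets_obj Y) :=
  exist _ (subsets_fun f) (subsets_fun_embedding f).

Lemma subsets_map_id (X : OV) : subsets_map (OVid X) = OFBAid (subsets_obj X).
Proof.
apply: sig_fun_eq => S /=; apply: (charvec_inj z0_neq_z1).
by rewrite -(hom_charvec z0_neq_z1 primalA (coord_map_hom _)) coord_map_id.
Qed.

Lemma subsets_map_comp (X Y Z : OV) (g : OVhom Y Z) (f : OVhom X Y) :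
  subsets_map (OVcomp g f) = OFBAcomp (subsets_map g) (subsets_map f).
Proof.
apply: sig_fun_eq => S /=; rewrite /subsets_fun -(cv_map_comp z0_neq_z1 primalA).
- by rewrite /cv_map coord_map_comp.
- exact: coord_map_hom.
- exact: coord_map_hom.
Qed.

Definition subsets_functor : Functor (OVfin opsA ltA) OFBA :=
  @Fun (OVfin opsA ltA) OFBA subsets_obj subsets_map subsets_map_id subsets_map_comp.

End SubsetsFunctor.

(** * Boolean powers: the functor from OFBA to OV_fin(A,<) *)

Section BooleanPower.
Variables (Op : Type) (ar : Op -> nat) (A : finType) (opsA : ops_on ar A) (a0 : A).
Variables (d : Order.disp_t) (B : finCTBDistrLatticeType d).
Implicit Types (p q : {ffun A -> B}) (al : B).
Local Notation index := (part_index a0).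

Definition bpow := {p : {ffun A -> B} | partition_of_unity p}.

Definition bpow_op o (ps : 'I_(ar o) -> {ffun A -> B}) : {ffun A -> B} :=
  [ffun a => \join_(b : {ffun 'I_(ar o) -> A} | opsA b == a) \meet_(j : 'I_(ar o)) ps j (b j)].

Lemma atom_le_bpow_op o (ps : 'I_(ar o) -> {ffun A -> B}) al a :
  (forall j, partition_of_unity (ps j)) -> ba_atom al ->
  (al <= bpow_op ps a) = (opsA (fun j => index (ps j) al) == a).
Proof.
move=> hps ha; rewrite ffunE atom_le_bigjoin //.
apply/existsP/idP => [[b /andP [/eqP <- /meetsP hb]]|h].
  suff -> : (fun j => index (ps j) al) = b by [].
  by apply: functional_extensionality => j; apply/eqP; rewrite -(atom_le_part a0) // hb.
exists [ffun j => index (ps j) al]; apply/andP; split.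
  rewrite -(eqP h); apply/eqP; congr (opsA _).
  by apply: functional_extensionality => j; rewrite ffunE.
by apply/meetsP => j _; rewrite ffunE (atom_le_part_index a0).
Qed.

Lemma bpow_op_partition o (ps : 'I_(ar o) -> {ffun A -> B}) :
  (forall j, partition_of_unity (ps j)) -> partition_of_unity (bpow_op ps).
Proof.
move=> hps; apply: partition_of_unity_atoms => [al ha | al a b ha].
  by exists (opsA (fun j => index (ps j) al)); rewrite atom_le_bpow_op.
by rewrite !atom_le_bpow_op // => /eqP <- /eqP <-.
Qed.

Definition bpow_ops : ops_on ar bpow :=
  fun o ps => exist _ (bpow_op (fun j => val (ps j))) (bpow_op_partition (fun j => valP (ps j))).

Variable ltA : rel A.

Definition bpow_neq p q : B := \join_(ab : A * A | ab.1 != ab.2) (p ab.1 `&` q ab.2).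
Definition bpow_lt p q : B := \join_(ab : A * A | ltA ab.1 ab.2) (p ab.1 `&` q ab.2).

Lemma atom_le_bpow_neq p q al : partition_of_unity p -> partition_of_unity q -> ba_atom al ->
  (al <= bpow_neq p q) = (index p al != index q al).
Proof.
move=> hp hq ha; rewrite atom_le_bigjoin //; apply/existsP/idP => [[[a b]]|ne].
  by rewrite lexI !(atom_le_part a0) // => /and3P [/= ? /eqP -> /eqP ->].
by exists (index p al, index q al); rewrite /= ne lexI !(atom_le_part_index a0).
Qed.

Lemma atom_le_bpow_lt p q al : partition_of_unity p -> partition_of_unity q -> ba_atom al ->
  (al <= bpow_lt p q) = ltA (index p al) (index q al).
Proof.
move=> hp hq ha; rewrite atom_le_bigjoin //; apply/existsP/idP => [[[a b]]|lt].
  by rewrite lexI !(atom_le_part a0) // => /and3P [/= ? /eqP -> /eqP ->].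
by exists (index p al, index q al); rewrite /= lt lexI !(atom_le_part_index a0).
Qed.

(* The first argument of [ord] is the region where [p > q], the second where [p < q]. *)
Definition bpow_le (ord : rel B) (p q : bpow) : Prop :=
  ord (bpow_neq (val p) (val q) `&` ~` bpow_lt (val p) (val q)) (bpow_lt (val p) (val q)).

End BooleanPower.

Section NaturalAtoms.
Variable B : OFBAobj.
Local Notation BB := (ba_car B).

Definition ba_atoms : seq BB := proj1_sig (constructive_indefinite_description _ (ba_natural B)).

Lemma ba_atomsP : uniq ba_atoms /\ (forall a, a \in ba_atoms = ba_atom a) /\
  forall x y, ba_ord x y <->
    (x = y \/ exists k, [/\ (k < size ba_atoms)%N, ~~ (nth \bot ba_atoms k <= x),
       nth \bot ba_atoms k <= y &
       forall t, (k < t < size ba_atoms)%N ->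
         (nth \bot ba_atoms t <= x) = (nth \bot ba_atoms t <= y)]).
Proof.
have [uq [mem ord]] := proj2_sig (constructive_indefinite_description _ (ba_natural B)).
do 2 split => //; move=> x y; rewrite ord.
by split=> [[->|[k [? [? [? ?]]]]]|[->|[k [? ? ? ?]]]]; by [left | right; exists k].
Qed.

Definition ba_dim := size ba_atoms.
Definition atom_nth (k : 'I_ba_dim) : BB := nth \bot ba_atoms k.

Lemma atom_nth_atom k : ba_atom (atom_nth k).
Proof. by case: ba_atomsP => _ [mem _]; rewrite -mem mem_nth. Qed.

Lemma atom_nthP al : ba_atom al -> exists k, al = atom_nth k.
Proof.
case: ba_atomsP => _ [mem _]; rewrite -mem => al_in.
by exists (Ordinal (etrans (index_mem _ _) al_in)); rewrite /atom_nth nth_index.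
Qed.

Lemma atom_nth_le k j : (atom_nth k <= atom_nth j) = (k == j).
Proof.
apply/idP/eqP => [kj|->]; last exact: lexx.
case/orP: (atom_le_eq (atom_nth_atom j) kj) => /eqP E.
  by move: (atom_neq0 (atom_nth_atom k)); rewrite E eqxx.
by apply: val_inj; move: E; case: ba_atomsP => uq _ /eqP; rewrite nth_uniq // => /eqP.
Qed.

Lemma ba_dim_gt0 : (0 < ba_dim)%N.
Proof.
have : (\top : BB) != \bot by rewrite eq_sym; exact: ba_nontrivial.
by case/exists_atom_le => al /atom_nthP [k _] _; apply: leq_ltn_trans (leq0n k) (ltn_ord k).
Qed.

Definition atoms_below (x : BB) : {set 'I_ba_dim} := [set k | atom_nth k <= x].

Lemma atoms_below_inj : injective atoms_below.
Proof.
move=> x y E; apply: atom_ext => al /atom_nthP [k ->].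
by move/setP: E => /(_ k); rewrite !inE.
Qed.

Lemma atoms_belowI x y : atoms_below (x `&` y) = atoms_below x :&: atoms_below y.
Proof. by apply/setP => k; rewrite !inE lexI. Qed.
Lemma atoms_belowU x y : atoms_below (x `|` y) = atoms_below x :|: atoms_below y.
Proof. by apply/setP => k; rewrite !inE atom_leU // atom_nth_atom. Qed.
Lemma atoms_belowC x : atoms_below (~` x) = ~: atoms_below x.
Proof. by apply/setP => k; rewrite !inE atom_leC // atom_nth_atom. Qed.
Lemma atoms_below0 : atoms_below \bot = set0.
Proof. by apply/setP => k; rewrite !inE lex0 (negbTE (atom_neq0 (atom_nth_atom k))). Qed.
Lemma atoms_belowT : atoms_below \top = setT.
Proof. by apply/setP => k; rewrite !inE lex1. Qed.

End NaturalAtoms.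

Section BooleanPowerObject.
Variables (Op : Type) (ar : Op -> nat) (A : finType) (opsA : ops_on ar A) (ltA : rel A).
Hypothesis ltA_linear : strict_linear ltA.
Variables (z0 z1 : A).
Hypothesis z0_lt_z1 : ltA z0 z1.
Variable B : OFBAobj.
Local Notation BB := (ba_car B).
Local Notation n := (ba_dim B).
Local Notation cv := (charvec z0 z1).
Local Notation index := (part_index z0).
Local Notation pw n := (@pow_ops _ _ _ opsA n).
Local Notation bpowB := (bpow A BB).
Local Notation bpow_opsB := (bpow_ops opsA z0 (B := BB)).
Let z0_neq_z1 := lt_z0_neq_z1 ltA_linear z0_lt_z1.

Lemma ba_ord_antilex (x y : BB) :
  ba_ord x y = antilexb ltA 1 (cv (atoms_below x)) (cv (atoms_below y)).
Proof.
case: (ba_atomsP B) => _ [_ ordE]; apply/idP/orP.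
- case/ordE => [->|[k [kn h1 h2 h3]]]; first by left; rewrite eqxx.
  right; apply/existsP; exists (Ordinal kn).
  rewrite perm1 (lt_charvec ltA_linear z0_lt_z1) !inE /atom_nth /= h1 h2.
  apply/forallP => t; apply/implyP => kt.
  by rewrite perm1 (eq_charvec z0_neq_z1) !inE /atom_nth h3 // kt ltn_ord.
- case=> [/eqP/(charvec_inj z0_neq_z1)/atoms_below_inj ->|].
    by apply/ordE; left.
  case/existsP => s /andP [h1 /forallP h2]; apply/ordE; right; exists s.
  move: h1; rewrite perm1 (lt_charvec ltA_linear z0_lt_z1) !inE => /andP [h1 h1'].
  split=> // t /andP [st tn].
  by move: (implyP (h2 (Ordinal tn)) st); rewrite perm1 (eq_charvec z0_neq_z1) !inE => /eqP.
Qed.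

Definition bpow_coord (p : bpowB) : {ffun 'I_n -> A} := [ffun k => index (val p) (atom_nth k)].

Lemma atom_nth_le_fiber (x : {ffun 'I_n -> A}) k a :
  (atom_nth k <= \join_(j | x j == a) atom_nth j) = (x k == a).
Proof.
rewrite atom_le_bigjoin ?atom_nth_atom //.
apply/existsP/idP => [[j /andP [/eqP <-]]|xk]; last by exists k; rewrite xk lexx.
by rewrite atom_nth_le => /eqP ->.
Qed.

Lemma fibers_partition (x : {ffun 'I_n -> A}) :
  partition_of_unity [ffun a => \join_(k | x k == a) atom_nth k].
Proof.
apply: partition_of_unity_atoms => [al /atom_nthP [k ->]|al a b /atom_nthP [k ->]].
  by exists (x k); rewrite ffunE atom_nth_le_fiber.
by rewrite !ffunE !atom_nth_le_fiber => /eqP <- /eqP.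
Qed.

Definition bpow_of_coord (x : {ffun 'I_n -> A}) : bpowB :=
  exist (fun p => partition_of_unity p) _ (fibers_partition x).

Lemma bpow_coordK : cancel bpow_coord bpow_of_coord.
Proof.
move=> p; apply: val_inj; apply/ffunP => a; apply: atom_ext => al /atom_nthP [k ->].
by rewrite ffunE atom_nth_le_fiber ffunE (atom_le_part z0) ?atom_nth_atom ?(valP p).
Qed.

Lemma bpow_of_coordK : cancel bpow_of_coord bpow_coord.
Proof.
move=> x; apply/ffunP => k; rewrite ffunE; apply/eqP.
by rewrite -(atom_le_part z0) ?atom_nth_atom ?(valP (bpow_of_coord x)) //= ffunE atom_nth_le_fiber.
Qed.

Lemma bpow_coord_hom : preserves_ops bpow_opsB (pw n) bpow_coord.
Proof.
move=> o ps; apply/ffunP => k; rewrite !ffunE; apply/eqP.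
rewrite -(atom_le_part z0) ?atom_nth_atom ?(valP (bpow_opsB ps)) //=.
rewrite (atom_le_bpow_op _ z0) ?atom_nth_atom //; last by move=> j; apply: valP.
by apply/eqP; congr (opsA _); apply: functional_extensionality => j; rewrite ffunE.
Qed.

Lemma bpow_coord_le p q :
  bpow_le ltA (@ba_ord B) p q <-> antilexb ltA 1 (bpow_coord p) (bpow_coord q).
Proof.
rewrite /bpow_le ba_ord_antilex atoms_belowI atoms_belowC.
rewrite (antilexb_charvec ltA_linear z0_lt_z1 1 (x := bpow_coord p) (y := bpow_coord q)) //.
- by move=> k; rewrite inE (atom_le_bpow_neq z0) ?atom_nth_atom ?(valP p) ?(valP q) // !ffunE.
- by move=> k; rewrite inE (atom_le_bpow_lt z0) ?atom_nth_atom ?(valP p) ?(valP q) // !ffunE.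
Qed.

Lemma bpow_iso : exists (m : nat) (pi : 'S_m) (phi : bpowB -> {ffun 'I_m -> A}),
  (0 < m)%N /\ bijective phi /\ preserves_ops bpow_opsB (pw m) phi /\
  forall p q, bpow_le ltA (@ba_ord B) p q <-> antilex_le ltA pi (phi p) (phi q).
Proof.
exists n, 1%g, bpow_coord; split; first exact: ba_dim_gt0.
split; first exact: Bijective bpow_coordK bpow_of_coordK.
split; first exact: bpow_coord_hom.
by move=> p q; rewrite bpow_coord_le; split=> /antilexbP.
Qed.

Definition bpow_obj : OVobj opsA ltA := OVObj bpow_iso.

End BooleanPowerObject.

Section OFBAMorphisms.
Variables (B B' : OFBAobj) (h : OFBAhom B B').
Local Notation hh := (proj1_sig h).

Lemma ofba_hom_inj : injective hh. Proof. by case: (proj2_sig h). Qed.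
Lemma ofba_homI x y : hh (x `&` y) = hh x `&` hh y.
Proof. by case: (proj2_sig h) => _ []. Qed.
Lemma ofba_homU x y : hh (x `|` y) = hh x `|` hh y.
Proof. by case: (proj2_sig h) => _ [_ []]. Qed.
Lemma ofba_homC x : hh (~` x) = ~` hh x.
Proof. by case: (proj2_sig h) => _ [_ [_ []]]. Qed.
Lemma ofba_hom0 : hh \bot = \bot.
Proof. by case: (proj2_sig h) => _ [_ [_ [_ []]]]. Qed.
Lemma ofba_hom1 : hh \top = \top.
Proof. by case: (proj2_sig h) => _ [_ [_ [_ [_ []]]]]. Qed.
Lemma ofba_hom_ord x y : ba_ord x y = ba_ord (hh x) (hh y).
Proof. by case: (proj2_sig h) => _ [_ [_ [_ [_ [_ ]]]]]. Qed.

Lemma ofba_hom_bigjoin (I : Type) (r : seq I) (P : pred I) (F : I -> ba_car B) :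
  hh (\join_(i <- r | P i) F i) = \join_(i <- r | P i) hh (F i).
Proof. exact: (big_morph hh ofba_homU ofba_hom0). Qed.

Lemma ofba_hom_bigmeet (I : Type) (r : seq I) (P : pred I) (F : I -> ba_car B) :
  hh (\meet_(i <- r | P i) F i) = \meet_(i <- r | P i) hh (F i).
Proof. exact: (big_morph hh ofba_homI ofba_hom1). Qed.

Lemma ofba_hom_partition (I : finType) (p : {ffun I -> ba_car B}) :
  partition_of_unity p -> partition_of_unity [ffun i => hh (p i)].
Proof.
case/andP => /forallP disj /eqP top; apply/andP; split.
  apply/forallP => i; apply/forallP => j; apply/implyP => ne.
  by move/forallP: (disj i) => /(_ j) /implyP /(_ ne) /eqP E; rewrite !ffunE -ofba_homI E ofba_hom0.
by apply/eqP; under eq_bigr do rewrite ffunE; rewrite -ofba_hom_bigjoin top ofba_hom1.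
Qed.

Lemma ofba_bijective_is_iso : bijective hh -> is_iso (C := OFBA) h.
Proof.
case=> g hK gK.
have g_emb : ofba_embedding (X := B') (Y := B) g.
  split; first exact: can_inj gK.
  split; first by move=> x y; apply: ofba_hom_inj; rewrite ofba_homI !gK.
  split; first by move=> x y; apply: ofba_hom_inj; rewrite ofba_homU !gK.
  split; first by move=> x; apply: ofba_hom_inj; rewrite ofba_homC !gK.
  split; first by apply: ofba_hom_inj; rewrite ofba_hom0 !gK.
  split; first by apply: ofba_hom_inj; rewrite ofba_hom1 !gK.
  by move=> x y; rewrite (ofba_hom_ord (g x) (g y)) !gK.
by exists (exist _ g g_emb); split; apply: sig_fun_eq => x /=; [apply: hK | apply: gK].
Qed.

End OFBAMorphisms.

Section BooleanPowerFunctor.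
Variables (Op : Type) (ar : Op -> nat) (A : finType) (opsA : ops_on ar A) (ltA : rel A).
Hypothesis ltA_linear : strict_linear ltA.
Variables (z0 z1 : A).
Hypothesis z0_lt_z1 : ltA z0 z1.
Local Notation G := (bpow_obj opsA ltA_linear z0_lt_z1).

Section Map.
Variables (B B' : OFBAobj) (h : OFBAhom B B').

Definition bpow_fun (p : bpow A (ba_car B)) : bpow A (ba_car B') :=
  exist (fun q => partition_of_unity q) _ (ofba_hom_partition h (valP p)).

Lemma bpow_fun_embedding : ov_embedding (X := G B) (Y := G B') bpow_fun.
Proof.
split.
  move=> p q /(congr1 val) /= /ffunP E; apply: val_inj; apply/ffunP => a.
  by apply: (@ofba_hom_inj _ _ h); have := E a; rewrite !ffunE.
split.
  move=> o ps; apply: val_inj; apply/ffunP => a; rewrite /= !ffunE ofba_hom_bigjoin.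
  by apply: eq_bigr => b _; rewrite ofba_hom_bigmeet; apply: eq_bigr => j _; rewrite ffunE.
have hom_join (P : pred (A * A)) (p q : bpow A (ba_car B)) :
    proj1_sig h (\join_(ab | P ab) (val p ab.1 `&` val q ab.2)) =
    \join_(ab | P ab) (val (bpow_fun p) ab.1 `&` val (bpow_fun q) ab.2).
  by rewrite ofba_hom_bigjoin; apply: eq_bigr => ab _; rewrite ofba_homI !ffunE.
move=> p q /=; rewrite /bpow_le (ofba_hom_ord h) ofba_homI ofba_homC.
by rewrite /bpow_neq /bpow_lt !hom_join.
Qed.

Definition bpow_map : OVhom (G B) (G B') := exist _ bpow_fun bpow_fun_embedding.

End Map.

Lemma bpow_map_id (B : OFBAobj) : bpow_map (OFBAid B) = OVid (G B).
Proof. by apply: sig_fun_eq => p; apply: val_inj; apply/ffunP => a; rewrite ffunE. Qed.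

Lemma bpow_map_comp (B1 B2 B3 : OFBAobj) (g : OFBAhom B2 B3) (f : OFBAhom B1 B2) :
  bpow_map (OFBAcomp g f) = OVcomp (bpow_map g) (bpow_map f).
Proof. by apply: sig_fun_eq => p; apply: val_inj; apply/ffunP => a; rewrite !ffunE. Qed.

Definition bpow_functor : Functor OFBA (OVfin opsA ltA) :=
  @Fun OFBA (OVfin opsA ltA) G bpow_map bpow_map_id bpow_map_comp.

End BooleanPowerFunctor.

(** * Unit and counit *)

Section Equivalence.
Variables (Op : Type) (ar : Op -> nat) (A : finType) (opsA : ops_on ar A) (ltA : rel A).
Hypotheses (primalA : primal opsA) (ltA_linear : strict_linear ltA).
Variables (z0 z1 : A).
Hypothesis z0_lt_z1 : ltA z0 z1.
Local Notation OV := (OVobj opsA ltA).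
Local Notation cv := (charvec z0 z1).
Local Notation F := (subsets_obj ltA_linear z0_lt_z1).
Local Notation Fmap := (subsets_map primalA ltA_linear z0_lt_z1).
Local Notation G := (bpow_obj opsA ltA_linear z0_lt_z1).
Local Notation Gmap := (bpow_map opsA ltA_linear z0_lt_z1).
Local Notation index := (part_index z0).
Let z0_neq_z1 := lt_z0_neq_z1 ltA_linear z0_lt_z1.

Lemma fibers_set_partition n (v : {ffun 'I_n -> A}) :
  partition_of_unity [ffun a => [set i | v i == a]].
Proof.
apply: partition_of_unity_atoms => [al|al a b]; rewrite atom_set => /existsP [j /eqP ->].
  by exists (v j); rewrite ffunE set1_le inE.
by rewrite !ffunE !set1_le !inE => /eqP <- /eqP.
Qed.

Lemma index_set1 n (p : {ffun A -> {set 'I_n}}) j a :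
  partition_of_unity p -> (index p [set j] == a) = (j \in p a).
Proof. by move=> hp; rewrite -(atom_le_part z0) ?atom_set1 // set1_le. Qed.

Lemma index_fibers n (v : {ffun 'I_n -> A}) i : index [ffun a => [set i | v i == a]] [set i] = v i.
Proof. by apply/eqP; rewrite index_set1 ?fibers_set_partition // ffunE inE. Qed.

Section Unit.
Variable X : OV.

Definition ov_unit_fun (x : ov_car X) : bpow A {set 'I_(ov_dim X)} :=
  exist (fun p => partition_of_unity p) _ (fibers_set_partition (ov_coord x)).

Lemma ov_unit_embedding : ov_embedding (X := X) (Y := G (F X)) ov_unit_fun.
Proof.
split.
  move=> x y /(congr1 val) /= /ffunP E; apply: (can_inj (@ov_coordK _ _ _ _ _ X)); apply/ffunP => i.
  by move: (E (ov_coord x i)); rewrite !ffunE => /setP /(_ i); rewrite !inE eqxx => /esym/eqP.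
split.
  move=> o xs; apply: val_inj; apply/ffunP => a; apply/setP => i.
  rewrite /= ffunE inE ov_coord_hom ffunE -set1_le (atom_le_bpow_op _ z0) ?atom_set1 //;
    last by move=> j; apply: fibers_set_partition.
  by congr (opsA _ == _); apply: functional_extensionality => j; rewrite index_fibers.
move=> x y; rewrite ov_leE /= /bpow_le /= meetEsubset complEsubset.
rewrite (antilexb_charvec ltA_linear z0_lt_z1 _ (x := ov_coord x) (y := ov_coord y)) // => i.
- by rewrite -set1_le (atom_le_bpow_neq z0) ?fibers_set_partition ?atom_set1 // !index_fibers.
- by rewrite -set1_le (atom_le_bpow_lt z0) ?fibers_set_partition ?atom_set1 // !index_fibers.
Qed.

Definition ov_unit : OVhom X (G (F X)) := exist _ ov_unit_fun ov_unit_embedding.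

Lemma ov_unit_bijective : bijective ov_unit_fun.
Proof.
pose g (p : bpow A {set 'I_(ov_dim X)}) := ov_uncoord [ffun i => index (val p) [set i]].
have gK : cancel g ov_unit_fun.
  move=> p; apply: val_inj; apply/ffunP => a; apply/setP => i.
  by rewrite /= ffunE inE ov_uncoordK ffunE index_set1 // (valP p).
by exists g => // x; apply: ov_unit_embedding.1; rewrite gK.
Qed.

End Unit.

Lemma ov_unit_natural (X Y : OV) (f : OVhom X Y) :
  OVcomp (Gmap (Fmap f)) (ov_unit X) = OVcomp (ov_unit Y) f.
Proof.
apply: sig_fun_eq => x; apply: val_inj; apply/ffunP => a; rewrite /= !ffunE.
by rewrite /subsets_fun (cv_map_fiber z0_neq_z1 primalA (coord_map_hom f)) /coord_map /= ov_coordK.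
Qed.

Section Counit.
Variable B : OFBAobj.
Local Notation GB := (G B).
Local Notation n := (ov_dim GB).

Definition ofba_counit_fun (S : {set 'I_n}) : ba_car B := val (ov_uncoord (cv S)) z1.

Definition recoord : {ffun 'I_n -> A} -> {ffun 'I_(ba_dim B) -> A} :=
  @bpow_coord _ z0 B \o @ov_uncoord _ _ _ _ _ GB.
Definition recoord_inv : {ffun 'I_(ba_dim B) -> A} -> {ffun 'I_n -> A} :=
  @ov_coord _ _ _ _ _ GB \o @bpow_of_coord _ B.

Lemma recoordK : cancel recoord recoord_inv.
Proof. by move=> x; rewrite /recoord /recoord_inv /= bpow_coordK ov_uncoordK. Qed.
Lemma recoord_invK : cancel recoord_inv recoord.
Proof. by move=> x; rewrite /recoord /recoord_inv /= ov_coordK bpow_of_coordK. Qed.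

Lemma recoord_hom : preserves_ops (@pow_ops _ _ _ opsA n) (@pow_ops _ _ _ opsA _) recoord.
Proof. by apply: preserves_ops_comp; [apply: ov_uncoord_hom | apply: bpow_coord_hom]. Qed.

Lemma recoord_inv_hom :
  preserves_ops (@pow_ops _ _ _ opsA _) (@pow_ops _ _ _ opsA n) recoord_inv.
Proof. exact: preserves_ops_can recoord_hom recoordK recoord_invK. Qed.

Lemma recoord_le x y :
  antilexb ltA 1 (recoord x) (recoord y) = antilexb ltA (ov_perm GB) x y.
Proof.
have leE := @ov_leE _ _ _ _ _ GB; have bleE := bpow_coord_le ltA_linear z0_lt_z1 (B := B).
rewrite /recoord /=; apply/idP/idP => [/bleE /leE | xy]; first by rewrite !ov_uncoordK.
by apply/bleE/leE; rewrite !ov_uncoordK.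
Qed.

Lemma atoms_below_counit S : atoms_below (ofba_counit_fun S) = cv_map z0 z1 recoord S.
Proof.
apply/setP => k; rewrite !inE /recoord /= ffunE.
by rewrite (atom_le_part z0) ?atom_nth_atom // (valP (@ov_uncoord _ _ _ _ _ GB (cv S))).
Qed.

Lemma ofba_counit_embedding : ofba_embedding (X := F GB) (Y := B) ofba_counit_fun.
Proof.
have hom := recoord_hom; have below_inj := @atoms_below_inj B.
split.
  move=> S T /(congr1 (@atoms_below B)); rewrite !atoms_below_counit.
  exact/(cv_map_inj z0_neq_z1 primalA hom)/can_inj/recoordK.
split.
  move=> S T; apply: below_inj; rewrite atoms_belowI !atoms_below_counit meetEsubset.
  exact: (cv_mapI z0_neq_z1 primalA hom).
split.
  move=> S T; apply: below_inj; rewrite atoms_belowU !atoms_below_counit joinEsubset.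
  exact: (cv_mapU z0_neq_z1 primalA hom).
split.
  move=> S; apply: below_inj; rewrite atoms_belowC !atoms_below_counit complEsubset.
  exact: (cv_mapC z0_neq_z1 primalA hom).
split.
  apply: below_inj; rewrite atoms_below0 !atoms_below_counit botEsubset.
  exact: (cv_map0 z0_neq_z1 primalA hom).
split.
  apply: below_inj; rewrite atoms_belowT !atoms_below_counit topEsubset.
  exact: (cv_mapT z0_neq_z1 primalA hom).
move=> S T /=; rewrite (ba_ord_antilex ltA_linear z0_lt_z1) !atoms_below_counit.
by rewrite -!(hom_charvec z0_neq_z1 primalA hom) recoord_le.
Qed.

Definition ofba_counit : OFBAhom (F GB) B := exist _ ofba_counit_fun ofba_counit_embedding.

Lemma ofba_counit_bijective : bijective ofba_counit_fun.
Proof.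
pose g x := cv_map z0 z1 recoord_inv (atoms_below x).
have gK : cancel g ofba_counit_fun.
  move=> x; apply: (@atoms_below_inj B); rewrite atoms_below_counit /g.
  rewrite -(cv_map_comp z0_neq_z1 primalA recoord_inv_hom recoord_hom).
  by apply/setP => k; rewrite inE /= recoord_invK charvec_eq1.
by exists g => // S; apply: ofba_counit_embedding.1; rewrite gK.
Qed.

End Counit.

Lemma ofba_counit_natural (B B' : OFBAobj) (h : OFBAhom B B') :
  OFBAcomp (ofba_counit B') (Fmap (Gmap h)) = OFBAcomp h (ofba_counit B).
Proof.
apply: sig_fun_eq => S /=; rewrite /ofba_counit_fun /subsets_fun.
rewrite -(hom_charvec z0_neq_z1 primalA (coord_map_hom _)) /coord_map /= ov_coordK.
by rewrite ffunE.
Qed.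

Lemma ov_ofba_equivalent : cat_equivalent (OVfin opsA ltA) OFBA.
Proof.
exists (subsets_functor primalA ltA_linear z0_lt_z1), (bpow_functor opsA ltA_linear z0_lt_z1).
split.
- exists ov_unit; split; first exact: ov_unit_natural.
  by move=> X; apply/ov_bijective_is_iso/ov_unit_bijective.
- exists ofba_counit; split; first exact: ofba_counit_natural.
  by move=> B; apply/ofba_bijective_is_iso/ofba_counit_bijective.
Qed.

End Equivalence.

Theorem theorem4p2 (Op : Type) (ar : Op -> nat) (A : finType)
    (opsA : ops_on ar A) (ltA : rel A) :
  primal opsA -> strict_linear ltA ->
  cat_equivalent (OVfin opsA ltA) OFBA.
Proof.
move=> primalA ltA_linear.
have [x [y [_ _ x_neq_y]]] := card_gt1P primalA.1.
have [z0 [z1 z0_lt_z1]] := strict_linear_exists_lt ltA_linear x_neq_y.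
exact: (ov_ofba_equivalent primalA ltA_linear z0_lt_z1).
Qed.
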